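(* Let $n\ge4$ be even, let $\gamma\in\mathbb{F}_4\setminus\mathbb{F}_2$, and let $F=\mathrm{Inv}\circ(0,1,\gamma)$ on $\mathbb{F}_{2^n}$. If $c\in\mathbb{F}_{2^n}\setminus\mathbb{F}_4$, then $3\le{}_c\Delta_F\le4$. Furthermore, ${}_c\Delta_F=3$ if $\mathrm{tr}(c\gamma)=\mathrm{tr}(c\gamma^2)=\mathrm{tr}(c^{-1}\gamma)=\mathrm{tr}(c^{-1}\gamma^2)=\mathrm{tr}\left(\frac{c}{(c+\gamma)^2}\right)=\mathrm{tr}\left(\frac{c\gamma^2}{(c+\gamma)^2}\right)=\mathrm{tr}\left(\frac{c\gamma}{(c+\gamma^2)^2}\right)=\mathrm{tr}\left(\frac{c}{(c+\gamma^2)^2}\right)=1$.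
   Context: $\mathbb{F}_4$ is the subfield of order $4$ of $\mathbb{F}_{2^n}$. $\mathrm{Inv}(x)=x^{2^n-2}$ on $\mathbb{F}_{2^n}$. $(0,1,\gamma)$ is the $3$-cycle sending $0\mapsto1$, $1\mapsto\gamma$, $\gamma\mapsto0$ and fixing all other elements; thus $F(0)=1$, $F(1)=\gamma^{-1}$, $F(\gamma)=0$ and $F(x)=x^{-1}$ otherwise. $\mathrm{tr}$ is the absolute trace $\mathbb{F}_{2^n}\to\mathbb{F}_2$. For $c\in\mathbb{F}_{2^n}$, ${}_cD_aF(x)=F(x+a)+cF(x)$; ${}_c\Delta_F(a,b)$ is the number of $x\in\mathbb{F}_{2^n}$ with ${}_cD_aF(x)=b$; and ${}_c\Delta_F=\max\{{}_c\Delta_F(a,b): a,b\in\mathbb{F}_{2^n},\ a\neq 0 \text{ if } c=1\}$. *)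

From HB Require Import structures.
From mathcomp Require Import all_boot all_order all_algebra all_field.
Set Implicit Arguments. Unset Strict Implicit. Unset Printing Implicit Defensive.
Import GRing.Theory.
Local Open Scope ring_scope.

(* Setting: F : finFieldType with #|F| = 2^n (so F is F_{2^n}). *)

Definition Inv (F : finFieldType) (n : nat) (x : F) : F := x ^+ (2 ^ n - 2).

Definition cycle3 (F : finFieldType) (g : F) (x : F) : F :=
  if x == 0 then 1 else if x == 1 then g else if x == g then 0 else x.

Definition InvCyc (F : finFieldType) (n : nat) (g : F) (x : F) : F :=
  Inv n (cycle3 g x).

(* Absolute trace F_{2^n} -> F_2, valued in F. *)
Definition abs_tr (F : finFieldType) (n : nat) (x : F) : F :=
  \sum_(i < n) x ^+ (2 ^ i).

Definition cDeltaAB (F : finFieldType) (f : F -> F) (c a b : F) : nat :=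
  #|[set x : F | f (x + a) + c * f x == b]|.

Definition cDelta (F : finFieldType) (f : F -> F) (c : F) : nat :=
  \max_(ab : F * F | (c != 1) || (ab.1 != 0)) cDeltaAB f c ab.1 ab.2.

(** In characteristic 2, [Inv] is inversion, so [F = Inv o (0,1,gam)] is [x |-> x^-1]
   outside {0, 1, gam}.  For [a = 0] the equation [F (x + a) + c F x = b] has at most one
   solution, since [F] is injective and [c != 1].  For [a != 0], a solution [x] such that
   neither [x] nor [x + a] lies in {0, 1, gam} is a root of [b x^2 + (a b + 1 + c) x + a c],
   so there are at most two of them.  The six remaining points come in pairs {p, p + a},
   and [x], [x + a] never both solve the equation.  If [a] lies in F_4 the equation is
   injective on F_4 because [c] does not.  Otherwise, eliminating [c] shows that no three
   of the six points are solutions, which gives the bound 4, and that two of them are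
   solutions only if [t^2 + t = T] is solvable for one of the eight constants [T] of the
   trace conditions, which is impossible when [tr T = 1]; this gives the bound 3.  The
   identity [cD_a F (x + a) = c * (c^-1)D_a F x] exchanges [p] with [p + a] and [c] with
   [c^-1], and halves the case analysis.  The lower bound comes from three explicit
   solutions for [a = gam (1 + c)] and [b = (1 + c gam) / (1 + c)]. *)

From HB Require Import structures.
From mathcomp Require Import all_boot all_order all_algebra all_field.
From Stdlib Require Import Ring Field.
Set Implicit Arguments. Unset Strict Implicit. Unset Printing Implicit Defensive.
Import GRing.Theory.
Local Open Scope ring_scope.

Lemma addr_eq0_pchar2 (R : nzRingType) (x y : R) :
  2%N \in [pchar R] -> (x + y == 0) = (x == y).
Proof. by move=> pchar2; rewrite addr_eq0 oppr_pchar2. Qed.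

Lemma addr_eq_pchar2 (R : nzRingType) (x y z : R) :
  2%N \in [pchar R] -> (x + y == z) = (x == z + y).
Proof. by move=> pchar2; apply/eqP/eqP => [<-|->]; rewrite addrK_pchar2. Qed.

Lemma eq0_of_collision (F : fieldType) (P K u v : F) : 2%N \in [pchar F] ->
  P = K * (u + v) :> F -> u = v -> P = 0.
Proof. by move=> pchar2 -> <-; rewrite addrr_pchar2 // mulr0. Qed.

Lemma eq0_of_collision2 (F : fieldType) (P K1 K2 u v w : F) : 2%N \in [pchar F] ->
  P = K1 * (u + v) + K2 * (u + w) :> F -> u = v -> u = w -> P = 0.
Proof. by move=> pchar2 -> <- <-; rewrite addrr_pchar2 // !mulr0 addr0. Qed.

Lemma sqrD_self_of_eq (F : fieldType) (t T K u v : F) : 2%N \in [pchar F] ->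
  t ^+ 2 + t + T = K * (u + v) :> F -> u = v -> t ^+ 2 + t = T.
Proof.
by move=> pchar2 e uv; apply/eqP; rewrite -addr_eq0_pchar2 // e uv addrr_pchar2 // mulr0.
Qed.

(* [ring] and [field] for fields of characteristic 2: the coefficients are taken in [bool],
   so that [1 + 1 = 0] is part of the normal form.  The operations are named so that the
   reification sees one syntactic form of each operator; [char2_fold] rewrites into it. *)
Section Char2Field.
Variable F : fieldType.
Hypothesis pchar2 : 2%N \in [pchar F].

Definition zeroF : F := 0.
Definition oneF : F := 1.
Definition addF (x y : F) : F := x + y.
Definition mulF (x y : F) : F := x * y.
Definition oppF (x : F) : F := - x.
Definition subF (x y : F) : F := x - y.
Definition invF (x : F) : F := x^-1.
Definition divF (x y : F) : F := x / y.
Definition bool2F (b : bool) : F := if b then oneF else zeroF.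

Lemma char2_field : field_theory zeroF oneF addF mulF subF oppF divF invF eq.
Proof.
rewrite /zeroF /oneF /addF /mulF /subF /oppF /divF /invF; split=> //.
- split=> // *; [exact: add0r|exact: addrC|exact: addrA|exact: mul1r|exact: mulrC|
    exact: mulrA|exact: mulrDl|exact: subrr].
- exact/eqP/oner_neq0.
- by move=> x /eqP x0; rewrite mulVf.
Qed.

Lemma char2_morph : ring_morph zeroF oneF addF mulF subF oppF eq
  false true xorb andb xorb id Bool.eqb bool2F.
Proof.
rewrite /zeroF /oneF /addF /mulF /subF /oppF /bool2F.
split=> //= [[] []|[] []|[] []|[]|[] []] //=;
  by rewrite ?(addr0, add0r, subr0, sub0r, mulr0, mul0r, mulr1, oppr0, subrr,
               oppr_pchar2 pchar2, addrr_pchar2 pchar2).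
Qed.

Definition char2_foldE :=
  (fun x y => erefl : x + y = addF x y, fun x y => erefl : x * y = mulF x y,
   fun x => erefl : - x = oppF x, fun x => erefl : x^-1 = invF x,
   erefl : 0 = zeroF, erefl : 1 = oneF).

End Char2Field.

Ltac bool2F_cst t := match t with
  | zeroF _ => constr:(false)
  | oneF _ => constr:(true)
  | _ => constr:(NotConstant) end.

Ltac char2_fold := rewrite ?exprS ?expr0 ?char2_foldE;
  match goal with |- @eq _ ?a ?b => let T := type of a in change (@eq T a b) end.

Ltac char2_nonzero := cbv beta iota delta [zeroF oneF addF mulF oppF invF bool2F];
  repeat split; apply/eqP; repeat (apply: mulf_neq0 || apply: expf_neq0 || apply: invr_neq0);
  rewrite ?oner_eq0 //; first [assumption | rewrite addrC; assumption | idtac].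

Ltac char2_ring := char2_fold; ring.
Ltac char2_field := char2_fold; field; try char2_nonzero.

Section AbsoluteTrace.
Variables (F : finFieldType) (n : nat).
Hypothesis cardF : #|F| = (2 ^ n)%N.

Lemma pchar2_card : 2%N \in [pchar F].
Proof. exact: card_finPcharP cardF _. Qed.

Lemma abs_trD (x y : F) : abs_tr n (x + y) = abs_tr n x + abs_tr n y.
Proof.
rewrite -big_split; apply: eq_bigr => i _.
by rewrite exprDn_pchar // pnatX pnatE // pchar2_card.
Qed.

Lemma abs_tr_sqr (x : F) : abs_tr n (x ^+ 2) = abs_tr n x.
Proof.
have xF : x ^+ (2 ^ n) = x by rewrite -cardF expf_card.
apply: (addrI x); rewrite [in RHS]addrC.
have := big_ord_recr n (fun i => x ^+ (2 ^ i)); rewrite /= xF => <-.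
rewrite big_ord_recl /= expr1; congr (_ + _).
by apply: eq_bigr => i _; rewrite -exprM -expnS.
Qed.

Lemma abs_tr_sqrD_self (y : F) : abs_tr n (y ^+ 2 + y) = 0.
Proof. by rewrite abs_trD abs_tr_sqr addrr_pchar2 // pchar2_card. Qed.

Lemma Inv_inv (x : F) : (1 < n)%N -> Inv n x = x^-1.
Proof.
move=> n_gt1; have n4 : (2 < 2 ^ n)%N by rewrite -[X in (X < _)%N]expn1 ltn_exp2l.
rewrite /Inv; have [->|x0] := eqVneq x 0.
  by rewrite invr0 expr0n subn_eq0 leqNgt n4.
apply: (mulIf x0); rewrite mulVf // -exprSr; apply: (mulIf x0); rewrite -exprSr.
by rewrite -addn2 subnK 1?ltnW // -cardF mul1r expf_card.
Qed.

End AbsoluteTrace.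

Definition F4 {F : fieldType} : {pred F} := [pred x | x ^+ 4 == x].

Section SubfieldF4.
Variables (F : fieldType).
Hypothesis pchar2 : 2%N \in [pchar F].

Lemma F4_0 : 0 \in @F4 F. Proof. by rewrite inE expr0n. Qed.
Lemma F4_1 : 1 \in @F4 F. Proof. by rewrite inE expr1n. Qed.

Lemma F4D x y : x \in F4 -> y \in F4 -> x + y \in @F4 F.
Proof.
rewrite !inE -[4%N]/(2 ^ 2)%N exprDn_pchar ?pnatX ?pnatE ?pchar2 //.
by move=> /eqP-> /eqP->.
Qed.

Lemma F4M x y : x \in F4 -> y \in F4 -> x * y \in @F4 F.
Proof. by rewrite !inE exprMn => /eqP-> /eqP->. Qed.

Lemma F4V x : x \in F4 -> x^-1 \in @F4 F.
Proof. by rewrite !inE exprVn => /eqP->. Qed.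

Lemma F4_addl (x a : F) : x \in F4 -> (x + a \in @F4 F) = (a \in F4).
Proof.
move=> xF; apply/idP/idP => [|aF]; last exact: F4D.
by move=> /(F4D xF); rewrite addKr_pchar2.
Qed.

Lemma notF4_neq0 (x : F) : x \notin F4 -> x != 0.
Proof. by apply: contraNneq => ->; rewrite F4_0. Qed.

Lemma notF4_neq1 (x : F) : x \notin F4 -> x != 1.
Proof. by apply: contraNneq => ->; rewrite F4_1. Qed.

Lemma F4_addr_neq0 (p x : F) : p \in F4 -> x \notin F4 -> p + x != 0.
Proof. by move=> pF4 xF4; apply: contraNneq xF4 => px0; rewrite -(F4_addl _ pF4) px0 F4_0. Qed.

End SubfieldF4.

Lemma card_filter_uniq (T : finType) (P : pred T) (s : seq T) :
  uniq s -> #|[set x in s | P x]| = count P s.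
Proof.
move=> s_uniq; rewrite -size_filter -(card_uniqP (filter_uniq _ s_uniq)).
by apply: eq_card => x; rewrite inE mem_filter andbC.
Qed.

Lemma card_quadratic_roots (F : finFieldType) (A B C : F) :
  C != 0 -> (#|[set x | (A * x ^+ 2 + B * x + C == 0)%R]| <= 2)%N.
Proof.
move=> C0; set p := A *: 'X^2 + B *: 'X + C%:P.
have rootE x : root p x = (A * x ^+ 2 + B * x + C == 0) by rewrite /root !hornerE.
have p0 : p != 0.
  apply: contra_neq C0 => p0; have := congr1 (coefp 0) p0; by rewrite /= !coefE /= !mulr0 !add0r.
have size_p : (size p <= 3)%N.
  rewrite (leq_trans (size_polyD _ _)) // geq_max (leq_trans (size_polyC_leq1 C)) // andbT.
  rewrite (leq_trans (size_polyD _ _)) // geq_max.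
  by rewrite !(leq_trans (size_scale_leq _ _)) ?size_polyXn ?size_polyX.
rewrite leqNgt; apply/card_gt2P => -[x [y [z [[xS yS zS] [xy yz zx]]]]].
have := @max_poly_roots _ p [:: x; y; z] p0.
rewrite !inE in xS yS zS.
rewrite /= !rootE xS yS zS !inE negb_or xy yz eq_sym zx.
by move=> /(_ isT isT) /leq_trans /(_ size_p).
Qed.

Definition cdiff {F : fieldType} (f : F -> F) (c a x : F) : F := f (x + a) + c * f x.

Section CDifferential.
Variables (F : fieldType) (f : F -> F) (c : F).
Hypotheses (pchar2 : 2%N \in [pchar F]) (f_inj : injective f) (c1 : c != 1).

Add Field char2F : (@char2_field F) (morphism (char2_morph pchar2), constants [bool2F_cst]).

Lemma cdiff_addr_self a x :
  cdiff f c a (x + a) + cdiff f c a x = (1 + c) * (f x + f (x + a)).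
Proof. by rewrite /cdiff addrK_pchar2 //; char2_ring. Qed.

Lemma cdiff_addr_invc a x : c != 0 -> cdiff f c a (x + a) = c * cdiff f c^-1 a x.
Proof. by move=> c0; rewrite /cdiff addrK_pchar2 //; char2_field. Qed.

Lemma inv_add_quadratic a b x : x != 0 -> x + a != 0 ->
  (x + a)^-1 + c * x^-1 = b -> b * x ^+ 2 + (a * b + 1 + c) * x + a * c = 0.
Proof. by move=> x0 xa0; apply: (eq0_of_collision (K := x * (x + a)) pchar2); char2_field. Qed.

Lemma cdiff_addr_self_neq a x : a != 0 -> cdiff f c a (x + a) != cdiff f c a x.
Proof.
move=> a0; apply/eqP => eqD; have := cdiff_addr_self a x.
rewrite eqD addrr_pchar2 // => /esym/eqP; rewrite mulf_eq0 !addr_eq0_pchar2 //.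
rewrite eq_sym (negbTE c1) /= => /eqP/f_inj/eqP.
by rewrite -addr_eq0_pchar2 // addKr_pchar2 // (negbTE a0).
Qed.

Lemma cdiff0_inj : injective (cdiff f c 0).
Proof.
have c10 : 1 + c != 0 by rewrite addr_eq0_pchar2 // eq_sym.
move=> x y; rewrite /cdiff !addr0 => eqD; apply/f_inj/(mulfI c10).
by rewrite !mulrDl !mul1r.
Qed.

Lemma cdiff_F4_inj a : {in F4, forall x, f x \in F4} -> c \notin F4 -> a \in F4 ->
  {in F4 &, injective (cdiff f c a)}.
Proof.
move=> fF4 cF4 aF4 x y xF4 yF4 eqD; apply/eqP; apply: contraNT cF4 => xy.
have fxy : f x + f y != 0 by rewrite addr_eq0_pchar2 // (inj_eq f_inj).
have -> : c = (f (x + a) + f (y + a)) / (f x + f y).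
  apply: (mulIf fxy); rewrite mulfVK //; apply/eqP; rewrite -addr_eq0_pchar2 //.
  move: eqD; rewrite /cdiff => /eqP; rewrite -addr_eq0_pchar2 // => /eqP <-.
  by apply/eqP; char2_ring.
by apply: F4M; [apply: (F4D pchar2) | apply/F4V/(F4D pchar2)]; apply: fF4; rewrite ?(F4D pchar2).
Qed.

End CDifferential.

(* The Artin-Schreier polynomial [X^2 + X + T] has no root; in characteristic 2 this
   follows from [tr T = 1] in a finite field. *)
Definition no_AS_root (F : fieldType) (T : F) : Prop := forall t : F, t ^+ 2 + t != T.

Lemma no_AS_root_pair_neq (F : fieldType) (T u v b : F) : no_AS_root T ->
  (u = v -> exists t, t ^+ 2 + t = T) -> ~~ ((u == b) && (v == b)).
Proof.
move=> noT col; apply/negP => /andP[/eqP ub /eqP vb].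
by have [t] := col (etrans ub (esym vb)); apply/eqP/noT.
Qed.

(* The [x] such that [x] or [x + a] is moved by the 3-cycle (0, 1, gam). *)
Definition exceptional_pts (F : fieldType) (gam a : F) : seq F :=
  [:: 0; 1; gam] ++ [seq p + a | p <- [:: 0; 1; gam]].

Definition inv_cycle3 (F : finFieldType) (gam x : F) : F := (cycle3 gam x)^-1.

Section InverseCycle.
Variables (F : finFieldType) (gam : F).
Hypotheses (pchar2 : 2%N \in [pchar F]) (gam4 : gam ^+ 4 = gam) (gam0 : gam != 0) (gam1 : gam != 1).
Add Field char2F : (@char2_field F) (morphism (char2_morph pchar2), constants [bool2F_cst]).
Local Notation f := (inv_cycle3 gam).

Lemma gam_sqr : gam ^+ 2 = gam + 1.
Proof.
have : gam * (gam + 1) * (gam ^+ 2 + gam + 1) = gam ^+ 4 + gam by char2_ring.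
move/eqP; rewrite gam4 addrr_pchar2 // !mulf_eq0 (negbTE gam0) addr_eq0_pchar2 // (negbTE gam1) /=.
by rewrite -addrA addr_eq0_pchar2 // => /eqP.
Qed.

Let gam_sqrF : mulF gam gam = addF gam (oneF F).
Proof. by rewrite /mulF -expr2 gam_sqr. Qed.

Ltac gam_field := char2_fold; field [gam_sqrF]; try char2_nonzero.

Lemma gam_inv : gam^-1 = gam + 1.
Proof. by apply: (mulfI gam0); rewrite mulfV //; gam_field. Qed.

Lemma gam_F4 : gam \in F4. Proof. by rewrite inE gam4. Qed.

Let gam1' : (1 : F) != gam. Proof. by rewrite eq_sym. Qed.

Lemma cycle3_inj : injective (cycle3 gam).
Proof.
pose cycle3V y := if y == 1 then 0 else if y == gam then 1 else if y == 0 then gam else y.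
have h01 : (0 == 1 :> F) = false by rewrite eq_sym oner_eq0.
have h0g : (0 == gam) = false by rewrite eq_sym (negbTE gam0).
have neqs := (h01, h0g, negbTE gam1, oner_eq0 F).
apply: (can_inj (g := cycle3V)) => x; rewrite /cycle3 /cycle3V.
have [->|x0] := eqVneq x 0; first by rewrite !eqxx.
have [->|x1] := eqVneq x 1; first by rewrite ?(eqxx, neqs).
have [->|xg] := eqVneq x gam; first by rewrite ?(eqxx, neqs).
by rewrite (negbTE x0) (negbTE x1) (negbTE xg).
Qed.

Lemma inv_cycle3_inj : injective f.
Proof. by move=> x y /invr_inj/cycle3_inj. Qed.

Lemma inv_cycle3_F4 x : x \in F4 -> f x \in F4.
Proof.
by move=> xF4; apply: F4V; rewrite /cycle3; repeat case: ifP => _; rewrite ?F4_0 ?F4_1 ?gam_F4.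
Qed.

Lemma inv_cycle3_notin x : x \notin [:: 0; 1; gam] -> f x = x^-1.
Proof.
by rewrite /inv_cycle3 /cycle3 !inE !negb_or => /and3P[/negbTE-> /negbTE-> /negbTE->].
Qed.

Lemma cycle3_pts_F4 x : x \in [:: 0; 1; gam] -> x \in F4.
Proof. by rewrite !inE => /or3P[]/eqP->; rewrite ?expr0n ?expr1n ?gam4. Qed.

Lemma notin_cycle3_pts x : x \notin F4 -> x \notin [:: 0; 1; gam].
Proof. exact/contra/cycle3_pts_F4. Qed.

Lemma inv_cycle3_0 : f 0 = 1. Proof. by rewrite /inv_cycle3 /cycle3 eqxx invr1. Qed.
Lemma inv_cycle3_1 : f 1 = gam + 1.
Proof. by rewrite /inv_cycle3 /cycle3 oner_eq0 eqxx gam_inv. Qed.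
Lemma inv_cycle3_gam : f gam = 0.
Proof. by rewrite /inv_cycle3 /cycle3 (negbTE gam0) (negbTE gam1) eqxx invr0. Qed.

Definition inv_cycle3E := (inv_cycle3_0, inv_cycle3_1, inv_cycle3_gam).

Section GenericShift.
Variable a : F.
Hypothesis aF4 : a \notin F4.

Lemma cdiff_low c p : p \in F4 -> cdiff f c a p = (p + a)^-1 + c * f p.
Proof. by move=> pF4; rewrite /cdiff inv_cycle3_notin // notin_cycle3_pts // F4_addl. Qed.

Lemma cdiff_high c p : p \in F4 -> cdiff f c a (p + a) = f p + c * (p + a)^-1.
Proof.
move=> pF4; rewrite /cdiff addrK_pchar2 // (inv_cycle3_notin (x := p + a)) //.
by rewrite notin_cycle3_pts // F4_addl.
Qed.

(* Each collision between values of [cdiff] at the six exceptional points is certified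
   by an identity [P = K * (u + v)] (or [t^2 + t + T = K * (u + v)]), where [u = v] is the
   collision; the multipliers come from eliminating [c]. *)
Let a0 : a != 0. Proof. by rewrite -[a]add0r F4_addr_neq0 ?F4_0. Qed.
Let a1 : 1 + a != 0. Proof. by rewrite F4_addr_neq0 ?F4_1. Qed.
Let ag : gam + a != 0. Proof. by rewrite F4_addr_neq0 ?gam_F4. Qed.
Let ag1 : gam + 1 + a != 0. Proof. by rewrite F4_addr_neq0 ?(F4D pchar2) ?gam_F4 ?F4_1. Qed.
Let g1 : 1 + gam != 0. Proof. by rewrite addr_eq0_pchar2 // eq_sym. Qed.

Lemma collision_low c p q : c != 0 ->
  p \in [:: 0; 1; gam] -> q \in [:: 0; 1; gam] -> p != q ->
  cdiff f c a p = cdiff f c a q -> exists t, t ^+ 2 + t = c^-1 * gam ^+ 2.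
Proof.
move=> c0 pP qP pq; rewrite !cdiff_low ?cycle3_pts_F4 // => e; exists ((p + a) / (p + q)).
apply: (sqrD_self_of_eq (K := (p + a) * (q + a) / (c * gam * (p + q))) pchar2 _ e).
move: pP qP pq {e}; rewrite !inE => /or3P[]/eqP-> /or3P[]/eqP->; rewrite ?eqxx // => _.
all: rewrite ?inv_cycle3E; gam_field.
Qed.

Lemma collision_0_1a c : cdiff f c a 0 = cdiff f c a (1 + a) -> exists t, t ^+ 2 + t = c * gam.
Proof.
rewrite cdiff_low ?F4_0 // cdiff_high ?F4_1 // !inv_cycle3E add0r => e.
exists (a * (c + gam + 1) * (gam + 1) + gam).
apply: (sqrD_self_of_eq (K := a * (1 + a) * (c + gam + 1) * gam) pchar2 _ e).
gam_field.
Qed.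

Section Cross.
Variable c : F.
Hypothesis cF4 : c \notin F4.
Let cg : c + gam != 0. Proof. by rewrite addrC F4_addr_neq0 ?gam_F4. Qed.


Let cg1' : c * (gam + 1) + 1 != 0.
Proof.
have -> : c * (gam + 1) + 1 = (gam + 1) * (c + gam) by gam_field.
by rewrite mulf_neq0 // addrC.
Qed.

Lemma collision_0_gama :
  cdiff f c a 0 = cdiff f c a (gam + a) -> exists t, t ^+ 2 + t = c / (c + gam) ^+ 2.
Proof.
rewrite cdiff_low ?F4_0 // cdiff_high ?gam_F4 // !inv_cycle3E add0r => e.
exists (a * c / (c * (gam + 1) + 1)).
apply: (sqrD_self_of_eq (K := a * (gam + a) * c / (c * (gam + 1) + 1) ^+ 2) pchar2 _ e).
gam_field.
Qed.

Lemma collision_1_gama :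
  cdiff f c a 1 = cdiff f c a (gam + a) -> exists t, t ^+ 2 + t = c * gam ^+ 2 / (c + gam) ^+ 2.
Proof.
rewrite cdiff_low ?F4_1 // cdiff_high ?gam_F4 // !inv_cycle3E => e.
exists (a * c * (gam + 1) / (c * (gam + 1) + 1)).
apply: (sqrD_self_of_eq
  (K := (1 + a) * (gam + a) * c * (gam + 1) / (c * (gam + 1) + 1) ^+ 2) pchar2 _ e).
gam_field.
Qed.

Let den := a * (1 + a) * (gam + a).

Lemma no_triple_collision_0_1_gam b :
  cdiff f c a 0 = b -> cdiff f c a 1 = b -> cdiff f c a gam = b -> False.
Proof.
rewrite !cdiff_low ?F4_0 ?F4_1 ?gam_F4 // !inv_cycle3E => e0 e1 e2.
have P0 : gam * den * (gam + 1 + a) = 0.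
  apply: (eq0_of_collision2 (K1 := den ^+ 2) (K2 := den ^+ 2 * gam)
    pchar2 _ (etrans e0 (esym e1)) (etrans e0 (esym e2))).
  by rewrite /den; gam_field.
by move/eqP: P0; apply/negP; rewrite /den !mulf_neq0 ?expf_neq0.
Qed.

Lemma no_triple_collision_0_1_gama b :
  cdiff f c a 0 = b -> cdiff f c a 1 = b -> cdiff f c a (gam + a) = b -> False.
Proof.
rewrite cdiff_high ?gam_F4 // !cdiff_low ?F4_0 ?F4_1 // !inv_cycle3E => e0 e1 e2.
have P0 : gam * a ^+ 2 * den = 0.
  apply: (eq0_of_collision2 (K1 := den ^+ 2 * (1 + (gam + a)^-1)) (K2 := den ^+ 2 * gam)
    pchar2 _ (etrans e0 (esym e1)) (etrans e0 (esym e2))).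
  by rewrite /den; gam_field.
by move/eqP: P0; apply/negP; rewrite /den !mulf_neq0 ?expf_neq0.
Qed.

Lemma no_triple_collision_0_1a_gama b :
  cdiff f c a 0 = b -> cdiff f c a (1 + a) = b -> cdiff f c a (gam + a) = b -> False.
Proof.
rewrite !cdiff_high ?F4_1 ?gam_F4 // cdiff_low ?F4_0 // !inv_cycle3E => e0 e1 e2.
have P0 : (1 + gam) * den * (gam + a) ^+ 3 = 0.
  apply: (eq0_of_collision2
    (K1 := den ^+ 2 * (1 + (gam + a)^-1)) (K2 := den ^+ 2 * (1 + (1 + a)^-1))
    pchar2 _ (etrans e0 (esym e1)) (etrans e0 (esym e2))).
  by rewrite /den; gam_field.
by move/eqP: P0; apply/negP; rewrite /den !mulf_neq0 ?expf_neq0.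
Qed.

Lemma no_triple_collision_0_1a_gam b :
  cdiff f c a 0 = b -> cdiff f c a (1 + a) = b -> cdiff f c a gam = b -> False.
Proof.
rewrite cdiff_high ?F4_1 // !cdiff_low ?F4_0 ?gam_F4 // !inv_cycle3E => e0 e1 e2.
have e02 := etrans e0 (esym e2).
(* Here elimination only yields [a (gam + a) = 1], which then forces [c = gam]. *)
have Q0 : a * (gam + a) + 1 = 0.
  have P0 : den * (gam + 1 + a) * (a * (gam + a) + 1) = 0.
    apply: (eq0_of_collision2 (K1 := den ^+ 2 * gam) (K2 := den ^+ 2 * gam * (1 + (1 + a)^-1))
      pchar2 _ (etrans e0 (esym e1)) e02).
    by rewrite /den; gam_field.
  have nz : den * (gam + 1 + a) != 0 by rewrite /den !mulf_neq0.
  by apply/eqP; move/eqP: P0; rewrite mulf_eq0 (negbTE nz).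
have : gam + c = 0.
  apply: (eq0_of_collision (K := a * (gam + a)) pchar2 _ e02).
  have -> : gam + c = gam + c * (a * (gam + a) + 1) + c by rewrite Q0 mulr0 addr0.
  by gam_field.
by move/eqP; rewrite addrC (negbTE cg).
Qed.

End Cross.

Lemma no_triple_collision_0 c b q1 q2 : c \notin F4 ->
  q1 \in [:: 1; 1 + a] -> q2 \in [:: gam; gam + a] ->
  cdiff f c a 0 = b -> cdiff f c a q1 = b -> cdiff f c a q2 = b -> False.
Proof.
move=> cF4; rewrite !inE => /orP[]/eqP-> /orP[]/eqP->.
- exact: no_triple_collision_0_1_gam.
- exact: no_triple_collision_0_1_gama.
- exact: no_triple_collision_0_1a_gam.
- exact: no_triple_collision_0_1a_gama.
Qed.

Lemma cdiff_invc_eq c x b : c != 0 -> cdiff f c a x = b -> cdiff f c^-1 a (x + a) = b / c.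
Proof.
by move=> c0 <-; rewrite cdiff_addr_invc ?invr_eq0 // invrK mulrC.
Qed.

End GenericShift.

Lemma cdiff_quadratic c a b x : x \notin exceptional_pts gam a ->
  cdiff f c a x = b -> b * x ^+ 2 + (a * b + 1 + c) * x + a * c = 0.
Proof.
rewrite /exceptional_pts /= add0r !(inE, negb_or) /= andbT.
move=> /and4P[x0 x1 xg /and3P[xa x1a xga]].
have xa0 : x + a != 0 by rewrite addr_eq_pchar2 // add0r.
rewrite /cdiff !inv_cycle3_notin ?inE ?negb_or ?x0 ?x1 ?xg //; first exact: inv_add_quadratic.
by rewrite !addr_eq_pchar2 // add0r xa x1a xga.
Qed.

Lemma exceptional_pts_uniq a : a \notin F4 -> uniq (exceptional_pts gam a).
Proof.
move=> aF4; have pts_uniq : uniq [:: 0; 1; gam].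
  by rewrite /= !inE negb_or eq_sym oner_eq0 !(eq_sym _ gam) gam0 gam1.
rewrite cat_uniq pts_uniq (map_inj_uniq (addIr a)) pts_uniq andbT andTb.
apply/hasPn => _ /mapP[p pP ->]; apply: notin_cycle3_pts.
by rewrite F4_addl // cycle3_pts_F4.
Qed.

Lemma exceptional_pts_F4 a x : a \in F4 -> x \in exceptional_pts gam a -> x \in F4.
Proof.
move=> aF4; rewrite mem_cat => /orP[/cycle3_pts_F4 //|/mapP[p pP ->]].
by apply: (F4D pchar2) => //; exact: cycle3_pts_F4.
Qed.

Section Counting.
Variable c : F.
Hypothesis cF4 : c \notin F4.
Let c0 : c != 0. Proof. exact: notF4_neq0. Qed.
Let c1 : c != 1. Proof. exact: notF4_neq1. Qed.
Let cV0 : c^-1 != 0. Proof. by rewrite invr_eq0. Qed.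
Let cVF4 : c^-1 \notin F4. Proof. by apply: contra cF4 => /F4V; rewrite invrK. Qed.
Let cg2 : c + gam ^+ 2 != 0. Proof. by rewrite addrC F4_addr_neq0 // F4M ?gam_F4. Qed.
Let gc1 : 1 + gam * c != 0.
Proof.
have -> : 1 + gam * c = gam * (c + gam ^+ 2) by gam_field.
by rewrite mulf_neq0.
Qed.

Lemma cdiff_addr_pair_neq a b p : a != 0 ->
  ~~ ((cdiff f c a p == b) && (cdiff f c a (p + a) == b)).
Proof.
move=> a0; apply: contra (cdiff_addr_self_neq pchar2 inv_cycle3_inj c1 p a0).
by case/andP => /eqP-> /eqP->.
Qed.

Lemma count_cdiff_exceptional_le2 a b : a \notin F4 ->
  (count (fun x => cdiff f c a x == b) (exceptional_pts gam a) <= 2)%N.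
Proof.
move=> aF4; have shift := cdiff_addr_pair_neq b _ (notF4_neq0 aF4).
have tri0 q1 q2 : q1 \in [:: 1; 1 + a] -> q2 \in [:: gam; gam + a] ->
    ~~ [&& cdiff f c a 0 == b, cdiff f c a q1 == b & cdiff f c a q2 == b].
  move=> q1P q2P; apply/and3P => -[/eqP e0 /eqP e1 /eqP e2].
  exact: (no_triple_collision_0 aF4 cF4 q1P q2P e0 e1 e2).
have tri1 q1 q2 : q1 \in [:: 1; 1 + a] -> q2 \in [:: gam; gam + a] ->
    ~~ [&& cdiff f c a a == b, cdiff f c a q1 == b & cdiff f c a q2 == b].
  move=> q1P q2P; apply/and3P => -[/eqP e0 /eqP e1 /eqP e2].
  (* A collision through [a] for [c] is one through [0] for [c^-1]. *)
  have shift_mem p q : q \in [:: p; p + a] -> q + a \in [:: p; p + a].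
    by rewrite !inE => /orP[]/eqP->; rewrite ?addrK_pchar2 // eqxx ?orbT.
  have e0' : cdiff f c^-1 a 0 = b / c by rewrite -(addrr_pchar2 pchar2 a) (cdiff_invc_eq c0 e0).
  exact: (no_triple_collision_0 aF4 cVF4 (shift_mem _ _ q1P) (shift_mem _ _ q2P) e0'
    (cdiff_invc_eq c0 e1) (cdiff_invc_eq c0 e2)).
have m11 := mem_head 1 [:: 1 + a]; have m1a := mem_last 1 [:: 1 + a].
have mg := mem_head gam [:: gam + a]; have mga := mem_last gam [:: gam + a].
move: (shift 0) (shift 1) (shift gam) (tri0 _ _ m11 mg) (tri0 _ _ m11 mga) (tri0 _ _ m1a mg).
move: (tri0 _ _ m1a mga) (tri1 _ _ m11 mg) (tri1 _ _ m11 mga) (tri1 _ _ m1a mg) (tri1 _ _ m1a mga).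
rewrite /exceptional_pts /= add0r.
by case: (cdiff f c a 0 == b); case: (cdiff f c a 1 == b); case: (cdiff f c a gam == b);
  case: (cdiff f c a a == b); case: (cdiff f c a (1 + a) == b); case: (cdiff f c a (gam + a) == b).
Qed.

Section Split.
Variables (a b : F).

Lemma card_cdiff_split : #|[set x | cdiff f c a x == b]| =
  (#|[set x in exceptional_pts gam a | cdiff f c a x == b]|
   + #|[set x | cdiff f c a x == b] :\: [set x in exceptional_pts gam a]|)%N.
Proof.
rewrite -(cardsID [set x in exceptional_pts gam a] [set x | cdiff f c a x == b]).
by congr (_ + _)%N; apply: eq_card => x; rewrite !inE andbC.
Qed.

Lemma card_cdiff_exceptional_F4 : a \in F4 ->
  (#|[set x in exceptional_pts gam a | cdiff f c a x == b]| <= 1)%N.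
Proof.
move=> aF4; apply/card_le1_eqP => x y; rewrite !in_set => /andP[xE /eqP ex] /andP[yE /eqP ey].
apply: (cdiff_F4_inj pchar2 inv_cycle3_inj inv_cycle3_F4 cF4 aF4);
  rewrite ?(exceptional_pts_F4 aF4) //.
by rewrite ex ey.
Qed.

Lemma card_cdiff_outside : a != 0 ->
  (#|[set x | cdiff f c a x == b] :\: [set x in exceptional_pts gam a]| <= 2)%N.
Proof.
move=> a0; apply: leq_trans (card_quadratic_roots b (a * b + 1 + c) (mulf_neq0 a0 c0)).
apply/subset_leq_card/subsetP => x; rewrite in_setD !in_set => /andP[xE /eqP e].
by apply/eqP; exact: cdiff_quadratic.
Qed.

Lemma card_cdiff_exceptional_le2 :
  (#|[set x in exceptional_pts gam a | cdiff f c a x == b]| <= 2)%N.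
Proof.
have [aF4|aF4] := boolP (a \in F4); first exact: leq_trans (card_cdiff_exceptional_F4 aF4) _.
by rewrite card_filter_uniq ?exceptional_pts_uniq ?count_cdiff_exceptional_le2.
Qed.

Lemma card_cdiff0 : a = 0 -> (#|[set x | cdiff f c a x == b]| <= 1)%N.
Proof.
move=> ->; apply/card_le1_eqP => x y; rewrite !inE => /eqP ex /eqP ey.
by apply: (cdiff0_inj pchar2 inv_cycle3_inj c1); rewrite ex ey.
Qed.

Lemma card_cdiff_le4 : (#|[set x | cdiff f c a x == b]| <= 4)%N.
Proof.
have [/card_cdiff0/leq_trans-> //|a0] := eqVneq a 0.
rewrite card_cdiff_split -[4%N]/(2 + 2)%N.
by rewrite leq_add ?card_cdiff_exceptional_le2 ?card_cdiff_outside.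
Qed.

End Split.

Section LowerBound.
Let a := gam * (1 + c).
Let b := (1 + c * gam) / (1 + c).
Let x1 := (gam + 1) * (1 + c).
Let x2 := (gam + 1) * c * (1 + c) / (1 + c * gam).

Let c1' : 1 + c != 0. Proof. by rewrite addr_eq0_pchar2 // eq_sym. Qed.
Let cg : c + gam != 0. Proof. by rewrite addrC F4_addr_neq0 ?gam_F4. Qed.
Let g1 : gam + 1 != 0. Proof. by rewrite addr_eq0_pchar2. Qed.
Let g1F4 : gam + 1 \in F4. Proof. by rewrite (F4D pchar2) ?gam_F4 ?F4_1. Qed.
Let cgV : 1 + c * gam != 0.
Proof.
have -> : 1 + c * gam = gam * (c + gam ^+ 2) by gam_field.
by rewrite mulf_neq0 // addrC F4_addr_neq0 // F4M ?gam_F4.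
Qed.
Let c1F4 : 1 + c \notin F4. Proof. by rewrite F4_addl ?F4_1. Qed.
Let mulF4 (p x : F) : p \in F4 -> p != 0 -> x \notin F4 -> p * x \notin F4.
Proof. by move=> pF4 p0; apply: contra => /(F4M (F4V pF4)); rewrite mulKf. Qed.
Let aF4 : a \notin F4. Proof. by rewrite mulF4 ?gam_F4. Qed.
Let x1F4 : x1 \notin F4. Proof. by rewrite mulF4. Qed.
Let inv_notF4 (x : F) : x \notin F4 -> f x = x^-1.
Proof. by move=> xF4; rewrite inv_cycle3_notin ?notin_cycle3_pts. Qed.

Lemma cdiff_witness_a : cdiff f c a a = b.
Proof. by rewrite /cdiff addrr_pchar2 // inv_cycle3_0 inv_notF4 // /a /b; gam_field. Qed.

Lemma cdiff_witness_x1 : cdiff f c a x1 = b.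
Proof.
rewrite /cdiff; have -> : x1 + a = 1 + c by rewrite /x1 /a; gam_field.
by rewrite !inv_notF4 // /x1 /b; gam_field.
Qed.

(* [x2] is a solution unless it is the exceptional point [1]; then [a + 1] is one. *)
Lemma cdiff_witness_a1 : x2 = 1 -> cdiff f c a (a + 1) = b.
Proof.
move=> x21; have a1F4 : a + 1 \notin F4 by rewrite addrC F4_addl ?F4_1.
rewrite /cdiff addrAC addrr_pchar2 // add0r inv_cycle3_1 inv_notF4 //.
apply/eqP; rewrite -addr_eq0_pchar2 //; apply/eqP.
apply: (eq0_of_collision (K := (1 + c * gam) / (gam * (c + gam) * (1 + c))) pchar2 _ x21).
by have a10 := notF4_neq0 a1F4; rewrite /a /b /x2; gam_field.
Qed.

Let s := gam * (1 + c) / (1 + c * gam).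
Let x2a : x2 + a = s. Proof. by rewrite /x2 /a /s; gam_field. Qed.
Let s0 : s != 0. Proof. by rewrite /s !mulf_neq0 ?invr_eq0. Qed.

Lemma cdiff_witness_x2 : x2 != 1 -> cdiff f c a x2 = b.
Proof.
move=> x21; have x2P : x2 \notin [:: 0; 1; gam].
  rewrite !inE (negbTE x21) /= negb_or; apply/andP; split.
    by rewrite /x2 !mulf_neq0 ?invr_eq0.
  rewrite -addr_eq0_pchar2 // (_ : x2 + gam = (gam + 1) * (c + gam) ^+ 2 / (1 + c * gam)).
    by rewrite !mulf_neq0 ?expf_neq0 ?invr_eq0.
  by rewrite /x2; gam_field.
have sP : s \notin [:: 0; 1; gam].
  rewrite !inE !negb_or s0 /=; apply/andP; split.
    rewrite -addr_eq0_pchar2 // (_ : s + 1 = (gam + 1) / (1 + c * gam)).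
      by rewrite mulf_neq0 ?invr_eq0.
    by rewrite /s; gam_field.
  rewrite -addr_eq0_pchar2 // (_ : s + gam = c / (1 + c * gam)).
    by rewrite mulf_neq0 ?invr_eq0.
  by rewrite /s; gam_field.
by rewrite /cdiff x2a !inv_cycle3_notin // /s /x2 /b; gam_field.
Qed.

Lemma card_cdiff_ge3 : (2 < #|[set x | cdiff f c a x == b]|)%N.
Proof.
have x1a : x1 + a = 1 + c by rewrite /x1 /a; gam_field.
have ax1 : a != x1 by rewrite -addr_eq0_pchar2 // addrC x1a.
apply/card_gt2P; have [x21|x21] := eqVneq x2 1.
  exists a, x1, (a + 1); rewrite !inE cdiff_witness_a cdiff_witness_x1 cdiff_witness_a1 //.
  have aa1 : a + 1 != a by rewrite -addr_eq0_pchar2 // addrAC addrr_pchar2 // add0r oner_eq0.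
  have x1a1 : x1 != a + 1.
    by rewrite -addr_eq0_pchar2 // addrA x1a addrAC addrr_pchar2 // add0r notF4_neq0.
  by rewrite !eqxx ax1 x1a1 aa1.
have x1x2 : x1 != x2.
  rewrite -addr_eq0_pchar2 // (_ : x1 + x2 = (gam + 1) ^+ 2 * (1 + c) * (c + gam) / (1 + c * gam)).
    by rewrite !mulf_neq0 ?expf_neq0 ?invr_eq0.
  by rewrite /x1 /x2; gam_field.
have x2a' : x2 != a by rewrite -addr_eq0_pchar2 // x2a.
by exists a, x1, x2; rewrite !inE cdiff_witness_a cdiff_witness_x1 cdiff_witness_x2 //.
Qed.

End LowerBound.

Section TraceConditions.
Hypotheses (AS1 : no_AS_root (c * gam)) (AS2 : no_AS_root (c * gam ^+ 2)).
Hypotheses (AS3 : no_AS_root (c^-1 * gam)) (AS4 : no_AS_root (c^-1 * gam ^+ 2)).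
Hypotheses (AS5 : no_AS_root (c / (c + gam) ^+ 2)).
Hypotheses (AS6 : no_AS_root (c * gam ^+ 2 / (c + gam) ^+ 2)).
Hypotheses (AS7 : no_AS_root (c * gam / (c + gam ^+ 2) ^+ 2)).
Hypotheses (AS8 : no_AS_root (c / (c + gam ^+ 2) ^+ 2)).

(* By [cdiff_invc_eq], collisions among the points [p + a] for [c] are collisions among the
   points [p] for [c^-1]; the eight trace conditions are stable under [c |-> c^-1]. *)
Section ShiftedPoints.
Variables (a b : F).
Hypothesis aF4 : a \notin F4.
Let a0 : a != 0. Proof. exact: notF4_neq0. Qed.
Let aa : a + a = 0. Proof. exact: addrr_pchar2. Qed.
Let m0 : 0 \in [:: 0; 1; gam]. Proof. by rewrite mem_head. Qed.
Let m1 : 1 \in [:: 0; 1; gam]. Proof. by rewrite !inE eqxx orbT. Qed.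
Let mg : gam \in [:: 0; 1; gam]. Proof. by rewrite !inE eqxx !orbT. Qed.
Let n01 : (0 : F) != 1. Proof. by rewrite eq_sym oner_eq0. Qed.
Let n0g : (0 : F) != gam. Proof. by rewrite eq_sym. Qed.

Let pair_neqV {T x y : F} : no_AS_root T ->
    (cdiff f c^-1 a (x + a) = cdiff f c^-1 a (y + a) -> exists t, t ^+ 2 + t = T) ->
  ~~ ((cdiff f c a x == b) && (cdiff f c a y == b)).
Proof.
move=> noT col; apply/negP => /andP[/eqP ex /eqP ey].
have [t] := col (etrans (cdiff_invc_eq c0 ex) (esym (cdiff_invc_eq c0 ey))).
exact/eqP/noT.
Qed.

Lemma exceptional_low_pairs_neq :
  [&& ~~ ((cdiff f c a 0 == b) && (cdiff f c a 1 == b)),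
      ~~ ((cdiff f c a 0 == b) && (cdiff f c a gam == b))
    & ~~ ((cdiff f c a 1 == b) && (cdiff f c a gam == b))].
Proof.
by rewrite !(no_AS_root_pair_neq _ AS4) //; apply: collision_low.
Qed.

Lemma exceptional_high_pairs_neq :
  [&& ~~ ((cdiff f c a a == b) && (cdiff f c a (1 + a) == b)),
      ~~ ((cdiff f c a a == b) && (cdiff f c a (gam + a) == b))
    & ~~ ((cdiff f c a (1 + a) == b) && (cdiff f c a (gam + a) == b))].
Proof.
have low p q : p \in [:: 0; 1; gam] -> q \in [:: 0; 1; gam] -> p != q ->
    cdiff f c^-1 a p = cdiff f c^-1 a q -> exists t, t ^+ 2 + t = c * gam ^+ 2.
  by move=> pP qP pq /(collision_low aF4 cV0 pP qP pq)[t]; rewrite invrK; exists t.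
by rewrite !(pair_neqV AS2) // ?aa ?addrK_pchar2 //; move/low; apply.
Qed.

Lemma exceptional_cross_pairs_neq :
  [&& ~~ ((cdiff f c a 0 == b) && (cdiff f c a (1 + a) == b)),
      ~~ ((cdiff f c a 0 == b) && (cdiff f c a (gam + a) == b))
    & ~~ ((cdiff f c a 1 == b) && (cdiff f c a (gam + a) == b))].
Proof.
apply/and3P; split.
- by apply: (no_AS_root_pair_neq _ AS1); exact: collision_0_1a.
- by apply: (no_AS_root_pair_neq _ AS5); exact: collision_0_gama.
- by apply: (no_AS_root_pair_neq _ AS6); exact: collision_1_gama.
Qed.

Lemma exceptional_cross_pairsV_neq :
  [&& ~~ ((cdiff f c a a == b) && (cdiff f c a 1 == b)),
      ~~ ((cdiff f c a a == b) && (cdiff f c a gam == b))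
    & ~~ ((cdiff f c a (1 + a) == b) && (cdiff f c a gam == b))].
Proof.
apply/and3P; split.
- by apply: (pair_neqV AS3); rewrite aa; exact: (@collision_0_1a a aF4 c^-1).
- apply: (pair_neqV AS7); rewrite aa.
  have -> : c * gam / (c + gam ^+ 2) ^+ 2 = c^-1 / (c^-1 + gam) ^+ 2 by gam_field.
  exact: (@collision_0_gama a aF4 c^-1 cVF4).
- apply: (pair_neqV AS8); rewrite addrK_pchar2 //.
  have -> : c / (c + gam ^+ 2) ^+ 2 = c^-1 * gam ^+ 2 / (c^-1 + gam) ^+ 2 by gam_field.
  exact: (@collision_1_gama a aF4 c^-1 cVF4).
Qed.

Lemma count_cdiff_exceptional_le1 :
  (count (fun x => cdiff f c a x == b) (exceptional_pts gam a) <= 1)%N.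
Proof.
have shift := cdiff_addr_pair_neq b _ a0.
move: (shift 0) (shift 1) (shift gam) exceptional_low_pairs_neq.
move: exceptional_high_pairs_neq exceptional_cross_pairs_neq exceptional_cross_pairsV_neq.
rewrite /exceptional_pts /= add0r.
by case: (cdiff f c a 0 == b); case: (cdiff f c a 1 == b); case: (cdiff f c a gam == b);
  case: (cdiff f c a a == b); case: (cdiff f c a (1 + a) == b); case: (cdiff f c a (gam + a) == b).
Qed.

End ShiftedPoints.

Lemma card_cdiff_le3 a b : (#|[set x | cdiff f c a x == b]| <= 3)%N.
Proof.
have [/card_cdiff0/leq_trans-> //|a0] := eqVneq a 0.
rewrite card_cdiff_split -[3%N]/(1 + 2)%N leq_add ?card_cdiff_outside //.
have [aF4|aF4] := boolP (a \in F4); first exact: card_cdiff_exceptional_F4.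
by rewrite card_filter_uniq ?exceptional_pts_uniq // count_cdiff_exceptional_le1.
Qed.

End TraceConditions.

End Counting.

End InverseCycle.

Section FiniteField.
Variables (F : finFieldType) (n : nat).
Hypothesis cardF : #|F| = (2 ^ n)%N.

Lemma no_AS_root_of_abs_tr (T : F) : abs_tr n T = 1 -> no_AS_root T.
Proof.
by move=> trT t; apply/eqP => tT; move/eqP: trT; rewrite -tT abs_tr_sqrD_self // eq_sym oner_eq0.
Qed.

Lemma cDeltaAB_InvCyc (gam c a b : F) : (1 < n)%N ->
  cDeltaAB (InvCyc n gam) c a b = #|[set x | cdiff (inv_cycle3 gam) c a x == b]|.
Proof. by move=> n_gt1; apply: eq_card => x; rewrite !inE /InvCyc !(Inv_inv cardF). Qed.

End FiniteField.

Theorem mainTheorem11 (F : finFieldType) (n : nat) (gam c : F) :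
  #|F| = (2 ^ n)%N -> (4 <= n)%N -> ~~ odd n ->
  gam ^+ 4 = gam -> gam != 0 -> gam != 1 ->
  c ^+ 4 != c ->
  let f := InvCyc n gam in
  let tr := abs_tr n in
  ((3 <= cDelta f c)%N /\ (cDelta f c <= 4)%N) /\
  (tr (c * gam) = 1 -> tr (c * gam ^+ 2) = 1 ->
   tr (c^-1 * gam) = 1 -> tr (c^-1 * gam ^+ 2) = 1 ->
   tr (c / (c + gam) ^+ 2) = 1 -> tr (c * gam ^+ 2 / (c + gam) ^+ 2) = 1 ->
   tr (c * gam / (c + gam ^+ 2) ^+ 2) = 1 -> tr (c / (c + gam ^+ 2) ^+ 2) = 1 ->
   cDelta f c = 3%N).
Proof.
move=> cardF n4 _ gam4 gam0 gam1 c4 f tr.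
have pchar2 := pchar2_card cardF.
have cF4 : c \notin F4 by rewrite inE.
have fE := cDeltaAB_InvCyc cardF gam c _ _ (leq_trans (isT : 1 < 4)%N n4).
have cDelta_le k : (forall a b, #|[set x | cdiff (inv_cycle3 gam) c a x == b]| <= k)%N ->
    (cDelta f c <= k)%N.
  by move=> le_k; apply/bigmax_leqP => ab _; rewrite fE.
have cDelta_ge3 : (3 <= cDelta f c)%N.
  apply: leq_trans (card_cdiff_ge3 pchar2 gam4 gam0 gam1 cF4) _; rewrite -fE.
  by apply: (leq_bigmax_cond (gam * (1 + c), (1 + c * gam) / (1 + c))); rewrite notF4_neq1.
split; first by split; last exact/cDelta_le/(card_cdiff_le4 pchar2 gam4 gam0 gam1 cF4).
move=> t1 t2 t3 t4 t5 t6 t7 t8; apply/eqP; rewrite eqn_leq cDelta_ge3 andbT.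
apply/cDelta_le => a b; apply: (card_cdiff_le3 pchar2 gam4 gam0 gam1 cF4);
  exact: (no_AS_root_of_abs_tr cardF).
Qed.
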